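(* Fix $n\ge 2$, a dictator agent $t$, another agent $i\ne t$, and a constant $a\in(0,\frac12)$. For $b\in(0,1)$ and a profile $\mathbf{x}$ with $x_l=\min\mathbf{x}$, $x_r=\max\mathbf{x}$, $L=x_r-x_l$, define $$h_b(\mathbf{x})=\begin{cases} x_t+\max\left\{\frac{2(1-b)}{b}(x_t-x_l),\; x_r-x_t\right\} & \text{if } x_t\in[x_l,\,x_l+bL),\\[2pt] x_t-\max\left\{x_t-x_l,\; \frac{2b}{1-b}(x_r-x_t)\right\} & \text{if } x_t\in[x_l+bL,\,x_r].\end{cases}$$ Let $f$ be the mechanism that on $\mathbf{x}$ outputs $l_1=x_t$ and $l_2=h_a(\mathbf{x})$ if $x_i\le x_t$, and $l_2=h_{1-a}(\mathbf{x})$ if $x_i>x_t$. Then $f$ is strategy-proof.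
   Context: Two-facility game on a line: agent $j\in\{1,\dots,n\}$ has location $x_j\in\mathbb{R}$. A mechanism outputs two facility locations $\{l_1,l_2\}$; an agent at $y$ has cost $\min\{|l_1-y|,|l_2-y|\}$. A mechanism $f$ is strategy-proof if for every agent $j$, every profile $\mathbf{x}=\langle x_j,\mathbf{x}_{-j}\rangle$ and every $x_j'\in\mathbb{R}$, the cost of agent $j$ (at true location $x_j$) under $f(x_j,\mathbf{x}_{-j})$ is at most her cost under $f(x_j',\mathbf{x}_{-j})$. *)

From HB Require Import structures.
From mathcomp Require Import all_boot all_order all_algebra.
Set Implicit Arguments. Unset Strict Implicit. Unset Printing Implicit Defensive.
Import Order.TTheory GRing.Theory Num.Theory.
Local Open Scope ring_scope.

Section Defs.
Variables (R : realFieldType) (n : nat).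

Definition profile := 'I_n -> R.

(* min / max of a profile (the seed x j0 is itself an entry, so it is harmless) *)
Definition pmin (j0 : 'I_n) (x : profile) : R := \big[Num.min/x j0]_(j < n) x j.
Definition pmax (j0 : 'I_n) (x : profile) : R := \big[Num.max/x j0]_(j < n) x j.

Definition cost (y : R) (l : R * R) : R := Num.min `|l.1 - y| `|l.2 - y|.

Definition mechanism := profile -> R * R.

Definition upd (x : profile) (j : 'I_n) (x' : R) : profile :=
  fun k => if k == j then x' else x k.

Definition strategy_proof (f : mechanism) : Prop :=
  forall (j : 'I_n) (x : profile) (x' : R),
    cost (x j) (f x) <= cost (x j) (f (upd x j x')).

Definition h (b : R) (t : 'I_n) (x : profile) : R :=
  let xl := pmin t x in
  let xr := pmax t x in
  let L := xr - xl in
  if x t < xl + b * L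
  then x t + Num.max (2 * (1 - b) / b * (x t - xl)) (xr - x t)
  else x t - Num.max (x t - xl) (2 * b / (1 - b) * (xr - x t)).

Definition mech (a : R) (t i : 'I_n) : mechanism :=
  fun x => (x t, if x i <= x t then h a t x else h (1 - a) t x).

End Defs.

From HB Require Import structures.
From mathcomp Require Import all_boot all_order all_algebra lra.
Set Implicit Arguments. Unset Strict Implicit. Unset Printing Implicit Defensive.
Import Order.TTheory GRing.Theory Num.Theory.
Local Open Scope ring_scope.

(* Write the second facility as [x_t + l].  Look at the deviating agent [j] from
   the dictator, at distance [d], and let [s] be the distance from [x_t] to the
   extreme agent on [j]'s side and [u] the distance to the extreme agent on the
   other side, scaled by the odds [(1-b)/b] (or [b/(1-b)] on the left).  Then
   either [l = max(2u, s)] points towards [j], or [s <= u] and [l] points away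
   from [j].  A misreport of [j] cannot move [x_t]; it cannot decrease [u] ([j]
   is not the opposite extreme, and if [j = i] its truthful side already gives
   the smallest odds); and it can decrease [s] only if [j] itself was the
   extreme, i.e. [s = d].  Under these conditions [j]'s cost [min(d, |l - d|)]
   can only grow. *)

Section Placement.
Variable R : realFieldType.

Definition offset (b p q : R) : R :=
  if p < b * (p + q) then Num.max (2 * (1 - b) / b * p) q
  else - Num.max p (2 * b / (1 - b) * q).

(* [l]: signed offset of the second facility from the dictator, positive towards
   the side under consideration; [s]: distance to the extreme agent on that side;
   [u]: odds-weighted distance to the extreme agent on the other side. *)
Definition placement_law (s u l : R) : Prop :=
  l = Num.max (2 * u) s \/ (s <= u /\ l <= 0).

Lemma placement_cost_le (d s u l s' u' l' : R) :
  0 <= d <= s -> s <= Num.max d s' -> u <= u' ->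
  placement_law s u l -> placement_law s' u' l' ->
  Num.min d `|l - d| <= Num.min d `|l' - d|.
Proof.
move=> /andP[d0 ds]; rewrite le_max => /orP ss' uu' hl hl'.
rewrite le_min ge_min lexx /= ge_min; apply/orP.
have [l'0|l'_gt0] := lerP l' 0; first by left; rewrite ler_normr lerNr; lra.
have [l'u' l's'] : 2 * u' <= l' /\ s' <= l'.
  by case: hl' l'_gt0 => [->|]; [rewrite !le_max !lexx ?orbT|lra].
case: hl => [->|[su _]]; last by left; rewrite ler_normr; lra.
have [us|su] := leP (2 * u) s.
- case: ss' => [sd|ss']; first by right; rewrite (_ : s - d = 0) ?normr0 //; lra.
  by right; rewrite ger0_norm ?ler_normr; lra.
- by right; rewrite ger0_norm ?ler_normr; lra.
Qed.

Lemma placement_offset (b p q : R) : 0 < b < 1 -> 0 <= p ->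
  placement_law q ((1 - b) / b * p) (offset b p q).
Proof.
move=> /andP[b0 b1] p0; rewrite /offset.
case: ltP => [_|C]; first by left; rewrite !mulrA.
right; split; last by rewrite oppr_le0 le_max p0.
by rewrite mulrAC ler_pdivlMr //; nra.
Qed.

Lemma placement_offsetN (b p q : R) : 0 < b < 1 -> 0 <= q ->
  placement_law p (b / (1 - b) * q) (- offset b p q).
Proof.
move=> /andP[b0 b1] q0; rewrite /offset; case: ltP => C; last first.
  by left; rewrite opprK maxC !mulrA.
right; split; last by rewrite oppr_le0 le_max q0 orbT.
by rewrite mulrAC ler_pdivlMr ?subr_gt0 //; nra.
Qed.

Lemma le_odds (b c : R) : 0 < c -> c <= b -> (1 - b) / b <= (1 - c) / c.
Proof.
move=> c0 cb; have b0 : 0 < b by exact: lt_le_trans cb.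
by rewrite ler_pdivrMr // mulrAC ler_pdivlMr //; nra.
Qed.

Lemma le_odds_compl (b c : R) : c < 1 -> b <= c -> b / (1 - b) <= c / (1 - c).
Proof.
move=> c1 bc; have := le_odds (b := 1 - b) (c := 1 - c).
by rewrite !subKr; apply; lra.
Qed.

Lemma cost_ge0 (y : R) (l : R * R) : 0 <= cost y l.
Proof. by rewrite /cost le_min !normr_ge0. Qed.

Lemma cost_self (y w : R) : cost y (y, w) = 0.
Proof. by rewrite /cost /= subrr normr0 min_l. Qed.

Lemma cost_offset (y z l : R) : cost y (z, z + l) = Num.min `|y - z| `|l - (y - z)|.
Proof. by rewrite /cost /= distrC; congr (Num.min _ `|_|); lra. Qed.

Lemma cost_offsetN (y z l : R) : cost y (z, z + l) = Num.min `|z - y| `|- l - (z - y)|.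
Proof. by rewrite /cost /=; congr (Num.min _ _); rewrite -normrN; congr `|_|; lra. Qed.

End Placement.

Section Profile.
Variables (R : realFieldType) (n : nat) (t : 'I_n).
Implicit Types (x : profile R n) (j : 'I_n) (v : R).

Lemma pmin_le x j : pmin t x <= x j.
Proof. exact: bigmin_le. Qed.

Lemma le_pmax x j : x j <= pmax t x.
Proof. exact: le_bigmax. Qed.

Lemma pmax_le_max_upd x j v : pmax t x <= Num.max (x j) (pmax t (upd x j v)).
Proof.
have le_k k : x k <= Num.max (x j) (pmax t (upd x j v)).
  rewrite le_max; case: (eqVneq k j) => [->|kj]; first by rewrite lexx.
  by have := le_pmax (upd x j v) k; rewrite /upd (negbTE kj) orbC => ->.
by apply: bigmax_le => [|k _]; apply: le_k.
Qed.

Lemma min_upd_le_pmin x j v : Num.min (x j) (pmin t (upd x j v)) <= pmin t x.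
Proof.
have ge_k k : Num.min (x j) (pmin t (upd x j v)) <= x k.
  rewrite ge_min; case: (eqVneq k j) => [->|kj]; first by rewrite lexx.
  by have := pmin_le (upd x j v) k; rewrite /upd (negbTE kj) orbC => ->.
by apply: le_bigmin => [|k _]; apply: ge_k.
Qed.

Lemma hE (b : R) x : h b t x = x t + offset b (x t - pmin t x) (pmax t x - x t).
Proof.
rewrite /offset.
have -> : x t - pmin t x + (pmax t x - x t) = pmax t x - pmin t x by lra.
by rewrite /h ltrBlDl; case: ifP.
Qed.

End Profile.

Section Mechanism.
Variables (R : realFieldType) (n : nat) (a : R) (t i : 'I_n).
Implicit Types (x : profile R n) (j : 'I_n) (v : R).

Definition weight x : R := if x i <= x t then a else 1 - a.

Lemma mechE x : mech a t i x = (x t, h (weight x) t x).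
Proof. by rewrite /mech /weight; case: ifP. Qed.

Lemma weight_in01 x : 0 < a < 1 -> 0 < weight x < 1.
Proof. by rewrite /weight => /andP[? ?]; case: ifP => _; apply/andP; split; lra. Qed.

Lemma upd_neq x j v : j != t -> upd x j v t = x t.
Proof. by move=> jt; rewrite /upd eq_sym (negbTE jt). Qed.

Lemma weight_upd_le x j v : a <= 1 - a -> j != t -> x t < x j ->
  weight (upd x j v) <= weight x.
Proof.
move=> a_le jt tj; rewrite /weight upd_neq //.
case: (eqVneq i j) => [->|ij]; last by rewrite /upd (negbTE ij).
by rewrite (lt_geF tj) /upd eqxx; case: ifP => _; lra.
Qed.

Lemma weight_le_upd x j v : a <= 1 - a -> j != t -> x j < x t ->
  weight x <= weight (upd x j v).
Proof.
move=> a_le jt jt_lt; rewrite /weight upd_neq //.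
case: (eqVneq i j) => [->|ij]; last by rewrite /upd (negbTE ij).
by rewrite (ltW jt_lt) /upd eqxx; case: ifP => _; lra.
Qed.

Lemma no_gain_right x j v : 0 < a < 1 -> a <= 1 - a -> j != t -> x t < x j ->
  cost (x j) (mech a t i x) <= cost (x j) (mech a t i (upd x j v)).
Proof.
move=> a01 a_le jt tj; set x' := upd x j v.
have x't : x' t = x t by exact: upd_neq.
have [/andP[w0 w1] /andP[w0' w1']] := (weight_in01 x a01, weight_in01 x' a01).
have tl := pmin_le t x t.
rewrite !mechE x't !hE x't !cost_offset gtr0_norm ?subr_gt0 //.
apply: (placement_cost_le _ _ _ (placement_offset _ _ _) (placement_offset _ _ _)).
- by rewrite subr_ge0 ltW //= lerD2r le_pmax.
- by rewrite -addr_maxl lerD2r pmax_le_max_upd.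
- apply: ler_pM; [apply: divr_ge0; lra | by rewrite subr_ge0 | |].
    exact: le_odds w0' (weight_upd_le v a_le jt tj).
  rewrite lerD2l lerN2.
  have := min_upd_le_pmin t x j v; rewrite ge_min => /orP[|//]; lra.
- by apply/andP.
- by rewrite subr_ge0.
- by apply/andP.
- by rewrite subr_ge0 -x't pmin_le.
Qed.

Lemma no_gain_left x j v : 0 < a < 1 -> a <= 1 - a -> j != t -> x j < x t ->
  cost (x j) (mech a t i x) <= cost (x j) (mech a t i (upd x j v)).
Proof.
move=> a01 a_le jt jt_lt; set x' := upd x j v.
have x't : x' t = x t by exact: upd_neq.
have [/andP[w0 w1] /andP[w0' w1']] := (weight_in01 x a01, weight_in01 x' a01).
have tr := le_pmax t x t.
rewrite !mechE x't !hE x't !cost_offsetN gtr0_norm ?subr_gt0 //.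
apply: (placement_cost_le _ _ _ (placement_offsetN _ _ _) (placement_offsetN _ _ _)).
- by rewrite subr_ge0 ltW //= lerD2l lerN2 pmin_le.
- by rewrite -addr_maxr -oppr_min lerD2l lerN2 min_upd_le_pmin.
- apply: ler_pM; [apply: divr_ge0; lra | by rewrite subr_ge0 | |].
    exact: le_odds_compl w1' (weight_le_upd v a_le jt jt_lt).
  rewrite lerD2r.
  have := pmax_le_max_upd t x j v; rewrite le_max => /orP[|//]; lra.
- by apply/andP.
- by rewrite subr_ge0.
- by apply/andP.
- by rewrite subr_ge0 -x't le_pmax.
Qed.

End Mechanism.

Theorem theorem7 (R : realFieldType) (n : nat) (hn : (2 <= n)%N)
  (t i : 'I_n) (hit : i != t) (a : R) (ha0 : 0 < a) (ha1 : a < 1 / 2) :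
  strategy_proof (mech a t i).
Proof.
have a01 : 0 < a < 1 by apply/andP; split; lra.
have a_le : a <= 1 - a by lra.
move=> j x v; have [->|jt] := eqVneq j t.
  by rewrite mechE cost_self cost_ge0.
case: (ltgtP (x t) (x j)) => [tj|jt_lt|<-].
- exact: no_gain_right.
- exact: no_gain_left.
- by rewrite mechE cost_self cost_ge0.
Qed.
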